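(* Let $\mathcal{Z}$ be a finite set of latent values and fix an observation $\mathbf{x}$ and parameters $\theta,\phi$. Let $p_\theta(\mathbf{x},\mathbf{z})\ge 0$ be a joint density with $p_\theta(\mathbf{x})=\sum_{\mathbf{z}\in\mathcal{Z}} p_\theta(\mathbf{x},\mathbf{z})>0$, and let $q_\phi(\mathbf{z}\mid\mathbf{x})$ be a probability distribution on $\mathcal{Z}$ with $q_\phi(\mathbf{z}\mid\mathbf{x})>0$ for all $\mathbf{z}$. For $T\in\mathbb{R}$ let $a_{\theta,\phi}(\mathbf{z}\mid\mathbf{x},T)=\dfrac{e^{T}p_\theta(\mathbf{x},\mathbf{z})}{e^{T}p_\theta(\mathbf{x},\mathbf{z})+q_\phi(\mathbf{z}\mid\mathbf{x})}$, $Z_R(\mathbf{x},T)=\sum_{\mathbf{z}}q_\phi(\mathbf{z}\mid\mathbf{x})a_{\theta,\phi}(\mathbf{z}\mid\mathbf{x},T)$, $r_{\theta,\phi}(\mathbf{z}\mid\mathbf{x},T)=q_\phi(\mathbf{z}\mid\mathbf{x})a_{\theta,\phi}(\mathbf{z}\mid\mathbf{x},T)/Z_R(\mathbf{x},T)$, and $$\text{R-ELBO}(T)=\mathbb{E}_{\mathbf{z}\sim R_{\theta,\phi}(\cdot\mid\mathbf{x},T)}\left[\log\frac{p_\theta(\mathbf{x},\mathbf{z})\,Z_R(\mathbf{x},T)}{q_\phi(\mathbf{z}\mid\mathbf{x})\,a_{\theta,\phi}(\mathbf{z}\mid\mathbf{x},T)}\right]\le \log p_\theta(\mathbf{x}).$$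 Then the R-ELBO gets tighter as $T$ decreases, i.e. $\text{R-ELBO}(T)$ is non-increasing in $T$, but it becomes more expensive to compute: the expected number of proposals $1/Z_R(\mathbf{x},T)$ drawn by the rejection sampler to produce one sample from $R_{\theta,\phi}(\cdot\mid\mathbf{x},T)$ is non-increasing in $T$.
   Context: The rejection sampler for $R_{\theta,\phi}(\cdot\mid\mathbf{x},T)$ repeatedly draws $\mathbf{z}\sim Q_\phi(\cdot\mid\mathbf{x})$ and $u\sim U[0,1]$ independently and outputs $\mathbf{z}$ the first time $u<a_{\theta,\phi}(\mathbf{z}\mid\mathbf{x},T)$; each proposal is accepted with probability $Z_R(\mathbf{x},T)$. *)

From HB Require Import structures.
From mathcomp Require Import all_boot all_order all_algebra.
From mathcomp Require Import all_classical all_reals all_analysis.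
Set Implicit Arguments. Unset Strict Implicit. Unset Printing Implicit Defensive.
Import Order.TTheory GRing.Theory Num.Theory.
Local Open Scope ring_scope.

(* MathComp + MathComp-Analysis, R : realType.  Latent space Z is a finType.
   p z  := p_theta(x, z)   (x, theta, phi fixed),  q z := q_phi(z | x). *)
Section RELBO.
Variables (R : realType) (Z : finType) (p q : Z -> R).

Definition accept (T : R) (z : Z) : R :=
  expR T * p z / (expR T * p z + q z).

(* normalizer Z_R(x, T) = acceptance probability of a single proposal *)
Definition ZR (T : R) : R := \sum_(z : Z) q z * accept T z.

Definition rdens (T : R) (z : Z) : R := q z * accept T z / ZR T.

Definition RELBO (T : R) : R :=
  \sum_(z : Z) rdens T z * ln (p z * ZR T / (q z * accept T z)).

(* expected number of proposals of the rejection sampler (geometric with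
   success probability Z_R) *)
Definition expected_proposals (T : R) : R := (ZR T)^-1.
End RELBO.

From HB Require Import structures.
From mathcomp Require Import all_boot all_order all_algebra.
From mathcomp Require Import all_classical all_reals all_analysis.
From mathcomp Require Import ring lra.
Import Order.TTheory GRing.Theory Num.Theory.
Local Open Scope ring_scope.

(* Write u_T(z) = p(z)/q(z) + e^{-T}.  Then q a_T = p / u_T, so Z_R(T) = sum p/u_T
   grows with T, R(.|T) is proportional to p/u_T, and
   R-ELBO(T) = log Z_R(T) + E_{R_T}[log u_T].
   For T1 <= T2, R_{T1} is R_{T2} tilted by rho = u_{T2}/u_{T1}.  Both rho and
   log u_{T1} are nondecreasing functions of p/q, so Chebyshev's sum inequality
   gives E_{R_{T2}}[log u_{T1}] <= E_{R_{T1}}[log u_{T1}], and Jensen's inequality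
   E_{R_{T2}}[log rho] <= log E_{R_{T2}}[rho] = log (Z_R(T1) / Z_R(T2)) handles the
   remaining terms. *)

Section weighted_sums.
Context {R : realType} {I : finType}.

Lemma similarly_ordered_by (t f g : I -> R) :
  (forall i j, t i <= t j -> f i <= f j) ->
  (forall i j, t i <= t j -> g i <= g j) ->
  forall i j, 0 <= (f i - f j) * (g i - g j).
Proof.
move=> f_homo g_homo i j; have [tij|/ltW tji] := leP (t i) (t j).
- by rewrite mulr_le0 // subr_le0 ?f_homo ?g_homo.
- by rewrite mulr_ge0 // subr_ge0 ?f_homo ?g_homo.
Qed.

Lemma weighted_sum_gt0 (a c : I -> R) :
  (forall i, 0 <= a i) -> (forall i, 0 < c i) -> 0 < \sum_i a i ->
  0 < \sum_i a i * c i.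
Proof.
move=> a_ge0 c_gt0 sum_a_gt0.
have ac_ge0 i : 0 <= a i * c i by rewrite mulr_ge0 // ltW.
rewrite lt_def sumr_ge0 // andbT; apply/eqP.
move=> /(psumr_eq0P (fun i _ => ac_ge0 i)) ac0.
suff : \sum_i a i = 0 by move=> sum_a0; rewrite sum_a0 ltxx in sum_a_gt0.
apply: big1 => i _; have /eqP := ac0 i isT.
by rewrite mulf_eq0 (gt_eqF (c_gt0 i)) orbF => /eqP.
Qed.

Context {w : I -> R} (w_ge0 : forall i, 0 <= w i).

Lemma chebyshev_sum (f g : I -> R) :
  (forall i j, 0 <= (f i - f j) * (g i - g j)) ->
  (\sum_i w i * f i) * (\sum_i w i * g i) <= (\sum_i w i) * \sum_i w i * f i * g i.
Proof.
move=> fg_similar.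
pose A i j := w i * w j * (f i - f j) * g i.
have sum_A : \sum_i \sum_j A i j =
    (\sum_i w i) * (\sum_i w i * f i * g i) - (\sum_i w i * f i) * (\sum_i w i * g i).
  rewrite [X in X - _]mulr_sumr [X in _ - X]mulr_sumr -sumrB.
  apply: eq_bigr => i _; rewrite !mulr_suml -sumrB.
  by apply: eq_bigr => j _; rewrite /A; ring.
have : 0 <= \sum_i \sum_j w i * w j * ((f i - f j) * (g i - g j)).
  by apply: sumr_ge0 => i _; apply: sumr_ge0 => j _; rewrite mulr_ge0 // mulr_ge0.
have -> : \sum_i \sum_j w i * w j * ((f i - f j) * (g i - g j)) =
    \sum_i \sum_j A i j + \sum_i \sum_j A j i.
  rewrite -big_split; apply: eq_bigr => i _; rewrite -big_split /=.
  by apply: eq_bigr => j _; rewrite /A; ring.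
rewrite [X in _ + X]exchange_big /= sum_A; lra.
Qed.

Lemma jensen_ln (f : I -> R) :
  \sum_i w i = 1 -> (forall i, 0 < f i) ->
  \sum_i w i * ln (f i) <= ln (\sum_i w i * f i).
Proof.
move=> sum_w1 f_gt0; set S := \sum_i w i * f i.
have S_gt0 : 0 < S by rewrite weighted_sum_gt0 // sum_w1.
have ln_le i : ln (f i / S) <= f i / S - 1.
  have := @le_ln1Dx R (f i / S - 1); rewrite [1 + _]addrC subrK; apply.
  have : 0 < f i / S by rewrite divr_gt0.
  lra.
have gap : \sum_i w i * ln (f i) - ln S = \sum_i w i * ln (f i / S).
  rewrite -[ln S]mul1r -sum_w1 mulr_suml -sumrB.
  by apply: eq_bigr => i _; rewrite ln_div ?posrE //; ring.
have mean : \sum_i w i * (f i / S - 1) = 0.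
  under eq_bigr do rewrite mulrBr mulr1 mulrA.
  by rewrite sumrB -mulr_suml -/S divff ?gt_eqF // sum_w1 subrr.
rewrite -subr_le0 gap -[X in _ <= X]mean; apply: ler_sum => i _.
by rewrite ler_wpM2l ?w_ge0 ?ln_le.
Qed.

End weighted_sums.

Lemma ler_ratio_shifts (R : realFieldType) (e1 e2 x y : R) :
  0 < e2 <= e1 -> 0 <= x <= y -> (x + e2) / (x + e1) <= (y + e2) / (y + e1).
Proof.
move=> /andP[e2_gt0 e21] /andP[x_ge0 xy].
have xe1 : 0 < x + e1 by lra.
have ye1 : 0 < y + e1 by lra.
rewrite ler_pdivrMr // mulrAC ler_pdivlMr //.
have : 0 <= (y - x) * (e1 - e2) by rewrite mulr_ge0 // subr_ge0.
lra.
Qed.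

Section RELBO_monotone.
Variables (R : realType) (Z : finType) (p q : Z -> R).
Hypotheses (p_ge0 : forall z, 0 <= p z) (sum_p_gt0 : 0 < \sum_z p z).
Hypothesis q_gt0 : forall z, 0 < q z.

Definition shifted_ratio (T : R) (z : Z) : R := p z / q z + expR (- T).

Lemma pq_ratio_ge0 z : 0 <= p z / q z.
Proof. by rewrite divr_ge0 // ltW. Qed.

Lemma shifted_ratio_gt0 T z : 0 < shifted_ratio T z.
Proof. by rewrite ltr_wpDl ?pq_ratio_ge0 ?expR_gt0. Qed.

Lemma shifted_ratio_nonincreasing T1 T2 z :
  T1 <= T2 -> shifted_ratio T2 z <= shifted_ratio T1 z.
Proof. by move=> T12; rewrite lerD2l ler_expR lerN2. Qed.

Lemma q_accept T z : q z * accept p q T z = p z / shifted_ratio T z.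
Proof.
have den_gt0 : 0 < p z * expR T + q z.
  by rewrite ltr_wpDl ?q_gt0 // mulr_ge0 // ltW ?expR_gt0.
rewrite /accept /shifted_ratio expRN; field.
by rewrite !gt_eqF ?expR_gt0 ?q_gt0.
Qed.

Lemma ZR_E T : ZR p q T = \sum_z p z / shifted_ratio T z.
Proof. by apply: eq_bigr => z _; rewrite q_accept. Qed.

Lemma ZR_gt0 T : 0 < ZR p q T.
Proof.
by rewrite ZR_E weighted_sum_gt0 // => z; rewrite invr_gt0 shifted_ratio_gt0.
Qed.

Lemma ZR_nondecreasing T1 T2 : T1 <= T2 -> ZR p q T1 <= ZR p q T2.
Proof.
move=> T12; rewrite !ZR_E; apply: ler_sum => z _.
rewrite ler_wpM2l // lef_pV2 ?posrE ?shifted_ratio_gt0 //.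
exact: shifted_ratio_nonincreasing.
Qed.

Lemma rdens_E T z : rdens p q T z = p z / (shifted_ratio T z * ZR p q T).
Proof. by rewrite /rdens q_accept invfM mulrA. Qed.

Lemma sum_rdens T : \sum_z rdens p q T z = 1.
Proof. by rewrite -mulr_suml divff // gt_eqF // ZR_gt0. Qed.

Lemma rdens_tilt T1 T2 z :
  rdens p q T2 z * (shifted_ratio T2 z / shifted_ratio T1 z) =
  rdens p q T1 z * (ZR p q T1 / ZR p q T2).
Proof.
have := shifted_ratio_gt0 T1 z; have := shifted_ratio_gt0 T2 z.
have := ZR_gt0 T1; have := ZR_gt0 T2.
by rewrite !rdens_E => *; field; rewrite ?gt_eqF.
Qed.

Lemma RELBO_E T :
  RELBO p q T = ln (ZR p q T) + \sum_z rdens p q T z * ln (shifted_ratio T z).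
Proof.
transitivity (\sum_z rdens p q T z * (ln (ZR p q T) + ln (shifted_ratio T z))).
  apply: eq_bigr => z _; have [pz0|pz_neq0] := eqVneq (p z) 0.
    by rewrite rdens_E pz0 !mul0r.
  rewrite q_accept -lnM ?posrE ?ZR_gt0 ?shifted_ratio_gt0 //; congr (_ * ln _).
  by field; rewrite pz_neq0 gt_eqF ?shifted_ratio_gt0.
under eq_bigr do rewrite mulrDr.
by rewrite big_split /= -mulr_suml sum_rdens mul1r.
Qed.

Lemma RELBO_nonincreasing T1 T2 : T1 <= T2 -> RELBO p q T2 <= RELBO p q T1.
Proof.
move=> T12; rewrite !RELBO_E.
set Z1 := ZR p q T1; set Z2 := ZR p q T2.
set r1 := rdens p q T1; set r2 := rdens p q T2.
set u1 := shifted_ratio T1; set u2 := shifted_ratio T2.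
pose rho z := u2 z / u1 z.
have r2_ge0 z : 0 <= r2 z.
  by rewrite /r2 rdens_E divr_ge0 // ltW // mulr_gt0 ?shifted_ratio_gt0 ?ZR_gt0.
have rho_gt0 z : 0 < rho z by rewrite divr_gt0 ?shifted_ratio_gt0.
have mass : \sum_z r2 z * rho z = Z1 / Z2.
  by under eq_bigr do rewrite rdens_tilt; rewrite -mulr_suml sum_rdens mul1r.
have rho_ln_u1_similar :
    forall z y, 0 <= (rho z - rho y) * (ln (u1 z) - ln (u1 y)).
  apply: (similarly_ordered_by (fun z => p z / q z)) => z y tzy.
  - apply: ler_ratio_shifts; last by rewrite pq_ratio_ge0 tzy.
    by rewrite expR_gt0 ler_expR lerN2.
  - by rewrite ler_ln ?posrE ?shifted_ratio_gt0 // lerD2r.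
have chebyshev : \sum_z r2 z * ln (u1 z) <= \sum_z r1 z * ln (u1 z).
  have := chebyshev_sum r2_ge0 rho (fun z => ln (u1 z)) rho_ln_u1_similar.
  have -> : \sum_z r2 z * rho z * ln (u1 z) = Z1 / Z2 * \sum_z r1 z * ln (u1 z).
    rewrite mulr_sumr; apply: eq_bigr => z _.
    by rewrite rdens_tilt -/r1 -/Z1 -/Z2; ring.
  by rewrite sum_rdens mul1r mass ler_pM2l // divr_gt0 ?ZR_gt0.
have jensen : \sum_z r2 z * ln (rho z) <= ln Z1 - ln Z2.
  by rewrite -ln_div ?posrE ?ZR_gt0 // -mass; apply: jensen_ln; rewrite ?sum_rdens.
have -> : \sum_z r2 z * ln (u2 z) =
    \sum_z r2 z * ln (u1 z) + \sum_z r2 z * ln (rho z).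
  rewrite -big_split; apply: eq_bigr => z _ /=.
  by rewrite /rho ln_div ?posrE ?shifted_ratio_gt0 //; ring.
lra.
Qed.

Lemma expected_proposals_nonincreasing T1 T2 :
  T1 <= T2 -> expected_proposals p q T2 <= expected_proposals p q T1.
Proof. by move=> T12; rewrite lef_pV2 ?posrE ?ZR_gt0 ?ZR_nondecreasing. Qed.

End RELBO_monotone.

Theorem corollary1 (R : realType) (Z : finType) (p q : Z -> R)
  (hp0 : forall z, 0 <= p z)
  (hpx : 0 < \sum_(z : Z) p z)
  (hq0 : forall z, 0 < q z)
  (hq1 : \sum_(z : Z) q z = 1) :
  (forall T1 T2 : R, T1 <= T2 -> RELBO p q T2 <= RELBO p q T1) /\
  (forall T1 T2 : R, T1 <= T2 ->
     expected_proposals p q T2 <= expected_proposals p q T1).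
Proof.
split=> T1 T2; [exact: RELBO_nonincreasing | exact: expected_proposals_nonincreasing].
Qed.
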